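(* If $A$ is a doubly nonnegative matrix with at most three distinct eigenvalues, then $A^t$ is doubly nonnegative for all $t\ge 1$.
   Context: A real matrix is doubly nonnegative if it is symmetric, positive semidefinite, and entry-wise nonnegative. For positive semidefinite $A=\sum_i\lambda_ix_ix_i^T$ (orthonormal eigenvectors, $\lambda_i\ge 0$) and $t>0$, $A^t=\sum_i\lambda_i^tx_ix_i^T$. *)

From mathcomp Require Import all_boot all_order all_algebra.
From mathcomp Require Import reals exp.
Set Implicit Arguments. Unset Strict Implicit. Unset Printing Implicit Defensive.
Import Order.TTheory GRing.Theory Num.Theory.
Local Open Scope ring_scope.

Definition symmetric_mx (R : realType) (n : nat) (A : 'M[R]_n) : Prop :=
  A^T = A.

Definition psd_mx (R : realType) (n : nat) (A : 'M[R]_n) : Prop :=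
  symmetric_mx A /\ forall x : 'cV[R]_n, 0 <= (x^T *m A *m x) ord0 ord0.

Definition nonneg_mx (R : realType) (n : nat) (A : 'M[R]_n) : Prop :=
  forall i j, 0 <= A i j.

Definition dnn_mx (R : realType) (n : nat) (A : 'M[R]_n) : Prop :=
  symmetric_mx A /\ psd_mx A /\ nonneg_mx A.

(* B is A^t: there is an orthonormal eigendecomposition
   A = sum_i lambda_i x_i x_i^T = U diag(lambda) U^T (columns of U are the
   orthonormal eigenvectors x_i, lambda_i >= 0) with
   B = sum_i lambda_i^t x_i x_i^T = U diag(lambda^t) U^T. *)
Definition is_mxpow (R : realType) (n : nat) (A : 'M[R]_n) (t : R)
    (B : 'M[R]_n) : Prop :=
  exists (U : 'M[R]_n) (d : 'rV[R]_n),
    U *m U^T = 1%:M /\ (forall i, 0 <= d ord0 i) /\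
    A = U *m diag_mx d *m U^T /\
    B = U *m diag_mx (map_mx (fun x => powR x t) d) *m U^T.

From mathcomp Require Import all_boot all_order all_algebra.
From mathcomp Require Import all_classical all_reals all_analysis.
From mathcomp Require Import lra ring.
Import Order.TTheory GRing.Theory Num.Theory numFieldNormedType.Exports.
Local Open Scope classical_set_scope.
Local Open Scope ring_scope.

(* Write A = U diag(d) U^T.  For i <> j, B_ij = sum_k w_k d_k^t with
   w_k = U_ik U_jk; orthogonality gives sum_k w_k = 0, and entrywise
   nonnegativity of A^m gives sum_k w_k d_k^m = (A^m)_ij >= 0 for m >= 1.
   Dividing the m-th moment by (max d)^m and letting m -> oo shows that the
   total weight carried by the largest eigenvalue x3 is nonnegative.  On a
   spectrum x1 < x2 < x3, the map x |-> x^t coincides with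
   f(x1) + c (x - x1) + K [x = x3], where c >= 0 is the slope of the chord
   from x1 to x2 and K >= 0 by convexity; hence
   B_ij = c sum_k w_k d_k + K sum_(d_k = x3) w_k >= 0. *)

Lemma cvg_expr_ge0_le1 (R : realType) (x : R) : 0 <= x <= 1 ->
  x ^+ m @[m --> \oo] --> ((x == 1)%:R : R).
Proof.
move=> /andP[x0 x1]; have [->|x_neq1] := eqVneq x 1.
  by under eq_cvg do rewrite expr1n; exact: cvg_cst.
by apply: cvg_expr; rewrite ger0_norm // lt_neqAle x_neq1.
Qed.

Lemma size3_between_eq {R : numDomainType} [s : seq R] [x1 x3 a b : R] :
  (size s <= 3)%N -> x1 \in s -> x3 \in s -> a \in s -> b \in s ->
  x1 < a < x3 -> x1 < b < x3 -> a = b.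
Proof.
move=> s3 x1s x3s as_ bs /andP[x1a ax3] /andP[x1b bx3].
apply/eqP; apply: contraLR s3 => a_neq_b; rewrite -ltnNge.
have uniq4 : uniq [:: x1; x3; a; b].
  rewrite /= !inE !negb_or a_neq_b !andbT (lt_eqF x1a) (lt_eqF x1b).
  by rewrite (gt_eqF ax3) (gt_eqF bx3) (lt_eqF (lt_trans x1a ax3)).
by apply: (uniq_leq_size uniq4) => x; rewrite !inE => /or4P[] /eqP->.
Qed.

Section MomentWeights.
Context {R : realType} {n : nat} {w d : 'I_n -> R}.
Hypothesis w_sum0 : \sum_k w k = 0.
Hypothesis d_ge0 : forall k, 0 <= d k.
Hypothesis moments_ge0 : forall m, (0 < m)%N -> 0 <= \sum_k w k * d k ^+ m.

Lemma sum_weight_max_ge0 (M : R) : (forall k, d k <= M) ->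
  0 <= \sum_(k | d k == M) w k.
Proof.
move=> d_leM; have [M_gt0|M_le0] := ltP 0 M; last first.
  rewrite (eq_bigl xpredT) ?w_sum0 // => k.
  by apply/eqP; apply: le_anti; rewrite d_leM (le_trans M_le0).
have ratio k : 0 <= d k / M <= 1.
  by rewrite divr_ge0 ?d_ge0 ?(ltW M_gt0) //= ler_pdivrMr // mul1r d_leM.
have lim_top : \sum_k w k * (d k / M) ^+ m @[m --> \oo] -->
               \sum_(k | d k == M) w k.
  rewrite big_mkcond /=; apply: cvg_big => [|k _]; first exact: add_continuous.
  rewrite (_ : (if _ then _ else _) = w k * (d k / M == 1)%:R).
    by apply: cvgMl_tmp; exact: cvg_expr_ge0_le1 (ratio k).
  have -> : (d k / M == 1) = (d k == M).
    by apply/eqP/eqP => [/divr1_eq //|->]; rewrite divff ?gt_eqF.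
  by case: eqP; rewrite ?mulr1 ?mulr0.
apply: (cvgr_to_ge lim_top); near=> m.
have m_gt0 : (0 < m)%N by near: m; exists 1%N.
rewrite (eq_bigr (fun k => w k * d k ^+ m / M ^+ m)); last first.
  by move=> k _; rewrite expr_div_n mulrA.
by rewrite -mulr_suml divr_ge0 ?exprn_ge0 ?(ltW M_gt0) ?moments_ge0.
Unshelve. all: by end_near.
Qed.

Lemma sum_weight_affine_top [f : R -> R] [x1 x3 c : R] :
  (forall k, d k != x3 -> f (d k) = f x1 + c * (d k - x1)) ->
  \sum_k w k * f (d k) =
    c * \sum_k w k * d k +
    (f x3 - f x1 - c * (x3 - x1)) * \sum_(k | d k == x3) w k.
Proof.
move=> f_affine; set K := f x3 - f x1 - c * (x3 - x1).
have -> : \sum_k w k * f (d k) = \sum_k ((f x1 - c * x1) * w k +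
   (c * (w k * d k) + if d k == x3 then K * w k else 0)).
  apply: eq_bigr => k _; have [->|dk_neq] := eqVneq (d k) x3.
    by rewrite /K; ring.
  by rewrite f_affine //; ring.
rewrite big_split /= -mulr_sumr w_sum0 mulr0 add0r big_split /= -big_mkcond.
by rewrite !mulr_sumr.
Qed.

Lemma sum_weight_convex_ge0 [s : seq R] [f : R -> R] :
  {in Num.nneg &, {homo f : x y / x <= y}} ->
  (forall x y z, 0 <= x -> x < y -> y < z ->
     (f y - f x) * (z - x) <= (f z - f x) * (y - x)) ->
  (size s <= 3)%N -> (forall k, d k \in s) ->
  0 <= \sum_k w k * f (d k).
Proof.
move=> f_mono f_chord s3 ds.
have [k0 _|n0] := pickP (@predT 'I_n); last by rewrite big1 // => k; have := n0 k.
case: (arg_minP d (isT : predT k0)) => k1 _ min_k1.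
case: (arg_maxP d (isT : predT k0)) => k3 _ max_k3.
set x1 := d k1 in min_k1 *; set x3 := d k3 in max_k3 *.
have x1_le k : x1 <= d k by exact: min_k1.
have x3_ge k : d k <= x3 by exact: max_k3.
have by_decomposition c : 0 <= c -> c * (x3 - x1) <= f x3 - f x1 ->
    (forall k, d k != x3 -> f (d k) = f x1 + c * (d k - x1)) ->
    0 <= \sum_k w k * f (d k).
  move=> c_ge0 cK f_affine; rewrite (sum_weight_affine_top f_affine).
  apply: addr_ge0; apply: mulr_ge0; rewrite ?subr_ge0 ?sum_weight_max_ge0 //.
  by have := moments_ge0 1 isT; under eq_bigr do rewrite expr1.
have f_at_x1 k : d k = x1 -> forall c, f (d k) = f x1 + c * (d k - x1).
  by move=> -> c; rewrite subrr mulr0 addr0.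
have [k2 /andP[x1_lt x3_gt]|no_mid] := pickP (fun k => x1 < d k < x3).
- have d21 : 0 < d k2 - x1 by rewrite subr_gt0.
  apply: (by_decomposition ((f (d k2) - f x1) / (d k2 - x1))).
  + by rewrite divr_ge0 ?(ltW d21) // subr_ge0 f_mono ?nnegrE ?d_ge0 ?x1_le.
  + by rewrite mulrAC ler_pdivrMr // f_chord ?d_ge0.
  move=> k dk_neq; have [/f_at_x1 //|dk_neq1] := eqVneq (d k) x1.
  have mid : x1 < d k < x3 by rewrite !lt_neqAle eq_sym dk_neq1 dk_neq x1_le x3_ge.
  rewrite (size3_between_eq s3 (ds k1) (ds k3) (ds k) (ds k2) mid) ?x1_lt //.
  by rewrite divfK ?gt_eqF // addrC subrK.
- apply: (by_decomposition 0) => //.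
    by rewrite mul0r subr_ge0 f_mono ?nnegrE ?d_ge0 ?x1_le.
  move=> k dk_neq; apply: f_at_x1; apply/eqP; apply: contraFT (no_mid k) => dk_neq1.
  by rewrite !lt_neqAle eq_sym dk_neq1 dk_neq x1_le x3_ge.
Qed.

End MomentWeights.

Lemma powR_chord {R : realType} {t : R} : 1 <= t -> forall x y z : R,
  0 <= x -> x < y -> y < z ->
  (y `^ t - x `^ t) * (z - x) <= (z `^ t - x `^ t) * (y - x).
Proof.
move=> t1 x y z x0 xy yz; have zx_gt0 : 0 < z - x by lra.
set l := (y - x) / (z - x).
have l0 : 0 <= l by rewrite divr_ge0 ?ltW // subr_gt0.
have l1 : l <= 1 by rewrite ler_pdivrMr // mul1r; lra.
have y_conv : l * z + (1 - l) * x = y by rewrite /l; field; lra.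
have := convex_powR t1 (Itv01 l0 l1) (x := z) (y := x).
rewrite [X in X `^ _ <= _]convRE convRE /= /unstable.onem y_conv !inE /= !in_itv /= !andbT.
move=> /(_ ltac:(lra) x0) convex_ineq.
have -> : y - x = l * (z - x) by rewrite /l divfK ?gt_eqF.
rewrite mulrA (mulrC _ l); apply: ler_wpM2r; lra.
Qed.

Lemma mul_mx_diag_trmx_mxE (R : comPzSemiRingType) p n (M : 'M[R]_(p, n))
    (e : 'rV[R]_n) i j :
  (M *m diag_mx e *m M^T) i j = \sum_k M i k * M j k * e 0 k.
Proof. by rewrite mxE; apply: eq_bigr => k _; rewrite mul_mx_diag !mxE mulrAC. Qed.

Lemma nonneg_mx_exp {R : realType} {n} {A : 'M[R]_n} (m : nat) :
  nonneg_mx A -> nonneg_mx (A ^+ m).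
Proof.
move=> A_ge0; elim: m => [|m IH] i j.
  by rewrite expr0 mxE ler0n.
by rewrite exprS -mulmxE mxE sumr_ge0 // => k _; rewrite mulr_ge0.
Qed.

Section OrthogonalDiagonalization.
Context {R : realType} {n : nat} {U : 'M[R]_n}.
Hypothesis UU : U *m U^T = 1%:M.

Lemma orthogonal_rows i j : \sum_k U i k * U j k = (i == j)%:R.
Proof.
have := congr1 (fun M : 'M[R]_n => M i j) UU; rewrite !mxE => <-.
by apply: eq_bigr => k _; rewrite mxE.
Qed.

Lemma diag_conj_exp (e : 'rV[R]_n) m :
  U *m diag_mx (map_mx (fun x => x ^+ m) e) *m U^T = (U *m diag_mx e *m U^T) ^+ m.
Proof.
have UtU : U^T *m U = 1%:M by exact: mulmx1C.
elim: m => [|m IH].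
  rewrite expr0 (_ : map_mx _ e = const_mx 1); last by apply/rowP => k; rewrite !mxE.
  by rewrite diag_const_mx mulmx1 UU.
rewrite exprS -IH -mulmxE !mulmxA -(mulmxA _ U^T) UtU mulmx1 -(mulmxA _ (diag_mx e)).
rewrite mulmx_diag; congr (_ *m diag_mx _ *m _); apply/rowP => k.
by rewrite !mxE exprS.
Qed.

Lemma eigenvalue_diag_conj (e : 'rV[R]_n) k :
  eigenvalue (U *m diag_mx e *m U^T) (e 0 k).
Proof.
have UtU : U^T *m U = 1%:M by exact: mulmx1C.
apply/eigenvalueP; exists (row k U^T).
  rewrite -row_mul !mulmxA UtU mul1mx mul_diag_mx.
  by apply/rowP => j; rewrite !mxE.
apply/eqP => /(congr1 (fun v => v *m U)); rewrite -row_mul UtU mul0mx.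
move/rowP/(_ k); rewrite !mxE eqxx /= => /eqP; by rewrite oner_eq0.
Qed.

End OrthogonalDiagonalization.

Lemma psd_diag_conj {R : realType} {n} (U : 'M[R]_n) [e : 'rV[R]_n] :
  (forall k, 0 <= e 0 k) -> psd_mx (U *m diag_mx e *m U^T).
Proof.
move=> e_ge0; split.
  by rewrite /symmetric_mx !trmx_mul trmxK tr_diag_mx mulmxA.
move=> x; rewrite (_ : x^T *m _ *m x = (x^T *m U) *m diag_mx e *m (x^T *m U)^T).
  rewrite mul_mx_diag_trmx_mxE; apply: sumr_ge0 => k _.
  by rewrite mulr_ge0 -?expr2 ?sqr_ge0.
by rewrite trmx_mul trmxK !mulmxA.
Qed.

Theorem theorem5p3 (R : realType) (n : nat) (A : 'M[R]_n) :
  dnn_mx A ->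
  (exists s : seq R, (size s <= 3)%N /\ forall a, eigenvalue A a -> a \in s) ->
  forall t : R, 1 <= t ->
  forall B : 'M[R]_n, is_mxpow A t B -> dnn_mx B.
Proof.
move=> [_ [_ A_ge0]] [s [s3 spec_s]] t t1 B [U [d [UU [d_ge0 [defA ->]]]]].
subst A.
have dt_ge0 k : 0 <= (map_mx (fun x => x `^ t) d) 0 k by rewrite mxE powR_ge0.
have B_psd := psd_diag_conj U dt_ge0.
split; first exact: B_psd.1.
split=> // i j; rewrite mul_mx_diag_trmx_mxE.
have [<-|i_neq_j] := eqVneq i j.
  by apply: sumr_ge0 => k _; rewrite mulr_ge0 -?expr2 ?sqr_ge0.
have w_sum0 : \sum_k U i k * U j k = 0.
  by rewrite (orthogonal_rows UU) (negbTE i_neq_j).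
have moments_ge0 m : (0 < m)%N -> 0 <= \sum_k U i k * U j k * d 0 k ^+ m.
  move=> _; have := nonneg_mx_exp m A_ge0 i j.
  rewrite -(diag_conj_exp UU d m) mul_mx_diag_trmx_mxE.
  by under eq_bigr do rewrite mxE.
have t_ge0 : 0 <= t by lra.
under eq_bigr do rewrite mxE.
apply: (sum_weight_convex_ge0 w_sum0 d_ge0 moments_ge0 (ge0_ler_powR t_ge0)
          (powR_chord t1) s3) => k.
exact: spec_s (eigenvalue_diag_conj UU d k).
Qed.
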